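(* Let $R$ be a finite ranked poset with a unique maximum element $\hat 1^R$. Let $\hat R=R\cup\{\hat 1\}$, where $\hat 1$ is a new element greater than every element of $R$ and of rank $|\hat 1^R|+1$, and let $\dot R=\hat R\setminus\{\hat 1^R\}$ with the induced order and ranks. Then $$\mathcal{M}_{\dot R}(z)=\mathcal{M}_{\hat R}(z)-(1-z)\,g^R_{|R|}(z),$$ where $|R|=|\hat 1^R|$ is the rank of $R$.
   Context: A ranked poset is a poset with a rank function $|\cdot|$ such that covering relations increase rank by exactly one and minimal elements have rank $-1$ (in $\hat R,\dot R$ the new element $\hat 1$ is assigned rank $|\hat 1^R|+1$ as stated). The Möbius function $\mu$ is $\mu[p,p]=1$, $\mu[p,q]=-\sum_{p\le s<q}\mu[p,s]$ for $p<q$, $0$ if $p\not\le q$; $\mu_z[p,q]=\mu[p,q]z^{|q|-|p|}$; $\mathcal{M}_P(z)=\sum_{p\le q\in P}\mu_z[p,q]$. The top polynomial of $R$ is $g^R_{|R|}(z)=\sum_{p\le q,\ |p|\le |R|\le|q|}\mu_z[p,q]=\sum_{p\in R}\mu_z[p,\hat 1^R]$. *)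

From HB Require Import structures.
From mathcomp Require Import all_boot all_order all_algebra.
Set Implicit Arguments. Unset Strict Implicit. Unset Printing Implicit Defensive.
Import Order.TTheory GRing.Theory Num.Theory.
Local Open Scope ring_scope.

Definition ranked_poset (T : finType) (le : rel T) (rank : T -> int) : Prop :=
  [/\ reflexive le, antisymmetric le, transitive le,
      (forall x y, le x y -> x != y ->
         (forall z, le x z -> le z y -> z = x \/ z = y) ->
         rank y = rank x + 1)
    & (forall x, (forall y, le y x -> y = x) -> rank x = -1)].

(* The recursion is run with fuel n; with fuel #|T| (longer
   than any chain) it computes the Möbius function. *)
Fixpoint mob_fuel (T : finType) (le : rel T) (S : {set T}) (n : nat) (p q : T)
  : int :=
  match n with
  | 0%N => if p == q then 1 else 0
  | n'.+1 =>
      if p == q then 1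
      else if le p q then
        - \sum_(s in S | le p s && (s != q) && le s q) mob_fuel le S n' p s
      else 0
  end.

Definition mobius (T : finType) (le : rel T) (S : {set T}) (p q : T) : int :=
  mob_fuel le S #|T| p q.

Definition mobz (T : finType) (le : rel T) (rank : T -> int) (S : {set T})
  (p q : T) : {poly int} :=
  (mobius le S p q)%:P * 'X^(absz (rank q - rank p)).

Definition MobPoly (T : finType) (le : rel T) (rank : T -> int) (S : {set T})
  : {poly int} :=
  \sum_(p in S) \sum_(q in S | le p q) mobz le rank S p q.

(* hat R = R ∪ {hat 1} realised as option T, None = hat 1 *)
Definition hat_le (T : finType) (le : rel T) : rel (option T) :=
  fun a b => match a, b with
             | _, None => true
             | None, Some _ => false
             | Some x, Some y => le x y
             end.

Definition hat_rank (T : finType) (rank : T -> int) (top : T) : option T -> int :=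
  fun a => match a with None => rank top + 1 | Some x => rank x end.

Definition top_poly (T : finType) (le : rel T) (rank : T -> int) (top : T)
  : {poly int} :=
  \sum_(p : T) \sum_(q : T | le p q && (rank p <= rank top <= rank q))
     mobz le rank [set: T] p q.

(* The Möbius functions of the hatted and dotted posets agree with that of R
   on pairs of elements of R: an interval [x, y] of R with y different from
   the top of R never meets that top.  At the new maximum 1^, the defining
   recursion gives mu_hat(x, 1^) = - sum_{x <= s <= top} mu(x, s), which is -1
   for x = top and 0 otherwise, while mu_dot(x, 1^) = - sum_{x <= s < top}
   mu(x, s) = mu(x, top).  Since 1^ has rank |R| + 1, these contribute the
   terms -z and z mu_z(x, top); and since top is the unique element of
   maximal rank, g_{|R|} = sum_x mu_z(x, top). *)

From HB Require Import structures.
From mathcomp Require Import all_boot all_order all_algebra.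
From mathcomp Require Import zify ring.
Set Implicit Arguments. Unset Strict Implicit. Unset Printing Implicit Defensive.
Import Order.TTheory GRing.Theory Num.Theory.
Local Open Scope ring_scope.

Lemma big_option (T : finType) (V : nmodType) (P : pred (option T))
    (F : option T -> V) :
  \sum_(s | P s) F s
  = (if P None then F None else 0) + \sum_(x | P (Some x)) F (Some x).
Proof.
rewrite big_mkcond (bigD1 None) //=; congr (_ + _).
rewrite (reindex_omap Some id) => [|[x|] //].
by rewrite [RHS]big_mkcond; apply: eq_bigl => x /=; rewrite eqxx.
Qed.

Lemma big_option_None (T : finType) (V : nmodType) (P : pred (option T))
    (F : option T -> V) :
  P None -> \sum_(s | P s) F s = F None + \sum_(x | P (Some x)) F (Some x).
Proof. by move=> PN; rewrite big_option PN. Qed.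

Definition itv (T : finType) (le : rel T) (p q : T) : {set T} :=
  [set s | le p s && le s q].

Section Interval.
Variables (T : finType) (le : rel T).
Hypotheses (le_refl : reflexive le) (le_anti : antisymmetric le)
  (le_trans : transitive le).

Lemma itv_subset p q p' q' :
  le p p' -> le q' q -> itv le p' q' \subset itv le p q.
Proof.
move=> pp' q'q; apply/subsetP => s; rewrite !inE => /andP[p's sq'].
by rewrite (le_trans pp' p's) (le_trans sq' q'q).
Qed.

Lemma itv_properl p q s :
  le p s -> le s q -> s != q -> itv le p s \proper itv le p q.
Proof.
move=> ps sq sNq; apply/properP; split; first exact: itv_subset.
exists q; first by rewrite inE (le_trans ps sq) le_refl.
rewrite inE; apply: contra sNq => /andP[_ qs].
by apply/eqP/le_anti; rewrite sq qs.
Qed.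

Lemma itv_properr p q s :
  le p s -> le s q -> s != p -> itv le s q \proper itv le p q.
Proof.
move=> ps sq sNp; apply/properP; split; first exact: itv_subset.
exists p; first by rewrite inE (le_trans ps sq) le_refl.
rewrite inE; apply: contra sNp => /andP[sp _].
by apply/eqP/le_anti; rewrite sp ps.
Qed.

End Interval.

Lemma mobius_refl (T : finType) (le : rel T) (S : {set T}) p :
  mobius le S p p = 1.
Proof. by rewrite /mobius; case: #|T| => [|n] /=; rewrite eqxx. Qed.

Lemma mobz_refl (T : finType) (le : rel T) (rank : T -> int) (S : {set T}) p :
  mobz le rank S p p = 1.
Proof. by rewrite /mobz mobius_refl subrr mulr1. Qed.

Section Mobius.
Variables (T : finType) (le : rel T).
Hypotheses (le_refl : reflexive le) (le_anti : antisymmetric le)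
  (le_trans : transitive le).

Lemma mob_fuel_stable S n m p q :
  (#|itv le p q| <= n.+1)%N -> (#|itv le p q| <= m.+1)%N ->
  mob_fuel le S n p q = mob_fuel le S m p q.
Proof.
have itv_gt1 p' q' : p' != q' -> le p' q' -> (1 < #|itv le p' q'|)%N.
  move=> pNq pq; rewrite (cardD1 p') (cardD1 q') !inE le_refl pq eq_sym pNq.
  by rewrite le_refl.
elim: n m p q => [|n IH] [|m] p q //= szn szm; case: eqVneq => // pNq;
  case pq: (le p q) => //; have := itv_gt1 _ _ pNq pq;
  rewrite ltnNge ?szn ?szm // => _.
congr (- _); apply: eq_bigr => s /andP[_ /andP[/andP[ps sNq] sq]].
have /proper_card lt_sz := itv_properl le_refl le_anti le_trans ps sq sNq.
by apply: IH; rewrite -ltnS; apply: leq_trans lt_sz _.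
Qed.

Lemma mobius_rec (S : {set T}) p q : p != q -> le p q ->
  mobius le S p q
  = - \sum_(s in S | le p s && (s != q) && le s q) mobius le S p s.
Proof.
move=> pNq pq; rewrite /mobius (@mob_fuel_stable _ _ #|T|.+1) /=.
- by rewrite (negbTE pNq) pq.
- exact: leqW (max_card _).
- exact: leqW (leqW (max_card _)).
Qed.

Lemma mobius_sum_itv (S : {set T}) p q : p != q -> le p q -> q \in S ->
  \sum_(s in S | le p s && le s q) mobius le S p s = 0.
Proof.
move=> pNq pq qS; rewrite (bigD1 q) /= ?qS ?pq ?le_refl // mobius_rec //.
rewrite addrC; apply/eqP; rewrite subr_eq0; apply/eqP/eq_bigl => s.
by rewrite -!andbA; do !bool_congr.
Qed.

Lemma mobius_eq_set (S S' : {set T}) p q :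
  (forall s, s \in itv le p q -> (s \in S) = (s \in S')) ->
  mobius le S p q = mobius le S' p q.
Proof.
rewrite /mobius; elim: #|T| q => [|n IH] q //= eqS.
case: eqVneq => // _; case: (le p q) => //; congr (- _); apply: eq_big => s.
  by apply/andb_id2r => /andP[/andP[ps _] sq]; apply: eqS; rewrite inE ps.
move=> /andP[_ /andP[/andP[ps _] sq]]; apply: IH => t; rewrite inE.
by move=> /andP[pt ts]; apply: eqS; rewrite inE pt (le_trans ts sq).
Qed.

End Mobius.

Section Hat.
Variables (T : finType) (le : rel T).
Hypotheses (le_refl : reflexive le) (le_anti : antisymmetric le)
  (le_trans : transitive le).

Lemma hat_le_refl : reflexive (hat_le le).
Proof. by case=> //= x; apply: le_refl. Qed.

Lemma hat_le_anti : antisymmetric (hat_le le).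
Proof. by move=> [x|] [y|] //= /le_anti ->. Qed.

Lemma hat_le_trans : transitive (hat_le le).
Proof. by move=> [y|] [x|] [z|] //=; apply: le_trans. Qed.

Lemma mob_fuel_hat_Some n x y :
  mob_fuel (hat_le le) [set: option T] n (Some x) (Some y)
  = mob_fuel le [set: T] n x y.
Proof.
elim: n y => [|n IH] y /=; rewrite (inj_eq Some_inj) //.
case: (x == y) => //; case: (le x y) => //; congr (- _).
rewrite big_option /= andbF add0r.
by apply: eq_big => [z|z _]; rewrite ?in_setT ?(inj_eq Some_inj) ?andbT.
Qed.

Lemma mobius_hat_Some x y :
  mobius (hat_le le) [set: option T] (Some x) (Some y) = mobius le [set: T] x y.
Proof.
rewrite /mobius mob_fuel_hat_Some card_option.
by apply: mob_fuel_stable => //; rewrite ?leqW // max_card.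
Qed.

Variable top : T.
Hypothesis le_top : forall x, le x top.

Lemma mobius_hat_None x :
  mobius (hat_le le) [set: option T] (Some x) None = - (x == top)%:R.
Proof.
rewrite (mobius_rec hat_le_refl hat_le_anti hat_le_trans) //.
rewrite big_option /= andbF add0r.
rewrite (eq_big (fun y => (y \in [set: T]) && (le x y && le y top))
                (mobius le [set: T] x)); first last.
- by move=> y _; apply: mobius_hat_Some.
- by move=> y; rewrite !in_setT le_top !andbT.
case: eqVneq => [->|xNtop]; last by rewrite mobius_sum_itv ?oppr0 ?in_setT.
rewrite (big_pred1 top) ?mobius_refl // => y /=.
by rewrite in_setT /=; apply/idP/eqP => [/le_anti ->|->]; rewrite ?le_refl.
Qed.

End Hat.

Section Ranked.
Variables (T : finType) (le : rel T) (rank : T -> int).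
Hypothesis ranked : ranked_poset le rank.

Let le_refl : reflexive le. Proof. by case: ranked. Qed.
Let le_anti : antisymmetric le. Proof. by case: ranked. Qed.
Let le_trans : transitive le. Proof. by case: ranked. Qed.

Lemma rank_lt x y : le x y -> x != y -> rank x < rank y.
Proof.
have [n] := ubnP #|itv le x y|; elim: n x y => // n IH x y szn xy xNy.
case: (pickP [pred z | [&& le x z, le z y, z != x & z != y]]) => [z | none].
  move=> /and4P[xz zy zNx zNy].
  have /proper_card ltl := itv_properl le_refl le_anti le_trans xz zy zNy.
  have /proper_card ltr := itv_properr le_refl le_anti le_trans xz zy zNx.
  apply: (@lt_trans _ _ (rank z)).
    by apply: IH (leq_trans ltl szn) xz _; rewrite eq_sym.
  exact: IH (leq_trans ltr szn) zy zNy.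
case: ranked => _ _ _ covers _.
rewrite (covers x y xy xNy) ?ltrDl // => z xz zy.
move: (none z); rewrite /= xz zy /= => /negbT/nandP.
by case=> /negPn/eqP ->; [left | right].
Qed.

Lemma rank_le x y : le x y -> rank x <= rank y.
Proof. by case: (eqVneq x y) => [->|xNy xy]; last exact/ltW/rank_lt. Qed.

End Ranked.

Section TopPolynomial.
Variables (T : finType) (le : rel T) (rank : T -> int) (top : T).
Hypotheses (ranked : ranked_poset le rank) (le_top : forall x, le x top).

Let le_refl : reflexive le. Proof. by case: ranked. Qed.
Let le_anti : antisymmetric le. Proof. by case: ranked. Qed.
Let le_trans : transitive le. Proof. by case: ranked. Qed.

Local Notation hle := (hat_le le).
Local Notation hrank := (hat_rank rank top).
Local Notation dot := [set x : option T | x != Some top].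
Local Notation mobzR := (mobz le rank [set: T]).

Let hle_refl : reflexive hle := hat_le_refl le_refl.
Let hle_anti : antisymmetric hle := hat_le_anti le_anti.
Let hle_trans : transitive hle := hat_le_trans le_trans.

Lemma le_topE y : le top y = (y == top).
Proof. by apply/idP/eqP => [ty|->]; [apply: le_anti; rewrite ty le_top|]. Qed.

Lemma top_poly_eq : top_poly le rank top = \sum_x mobzR x top.
Proof.
apply: eq_bigr => x _; apply: big_pred1 => y /=.
case: (eqVneq y top) => [->|yNtop].
  by rewrite le_top (rank_le ranked) ?le_top ?lexx.
case: (le x y) => //=; apply: negbTE; rewrite negb_and orbC -ltNge.
by rewrite (rank_lt ranked) ?le_top.
Qed.

Lemma mobius_dot_Some x y : y != top ->
  mobius hle dot (Some x) (Some y) = mobius le [set: T] x y.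
Proof.
move=> yNtop; rewrite -mobius_hat_Some //.
apply: (mobius_eq_set hle_trans) => -[s|]; rewrite !inE //= => /andP[_ sy].
by apply: contraNneq yNtop => -[stop]; rewrite -le_topE -stop.
Qed.

Lemma mobius_dot_None x : x != top ->
  mobius hle dot (Some x) None = mobius le [set: T] x top.
Proof.
move=> xNtop; rewrite (mobius_rec hle_refl hle_anti hle_trans) //.
rewrite big_option /= andbF add0r (mobius_rec le_refl le_anti le_trans) //.
congr (- _); apply: eq_big => [y|y].
  by rewrite !inE (inj_eq Some_inj) le_top !andbT andbC.
by rewrite inE (inj_eq Some_inj) => /andP[yNtop _]; apply: mobius_dot_Some.
Qed.

Lemma mobz_hat_Some x y :
  mobz hle hrank [set: option T] (Some x) (Some y) = mobzR x y.
Proof. by rewrite /mobz mobius_hat_Some. Qed.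

Lemma mobz_dot_Some x y : y != top ->
  mobz hle hrank dot (Some x) (Some y) = mobzR x y.
Proof. by move=> yNtop; rewrite /mobz mobius_dot_Some. Qed.

Lemma mobz_hat_None x :
  mobz hle hrank [set: option T] (Some x) None = if x == top then - 'X else 0.
Proof.
rewrite /mobz (mobius_hat_None le_refl le_anti le_trans le_top) /= mulrb.
case: eqVneq => [->|_]; last by rewrite oppr0 polyC0 mul0r.
have -> : absz (rank top + 1 - rank top)%R = 1%N by rewrite addrAC subrr.
by rewrite polyCN polyC1 mulN1r.
Qed.

Lemma mobz_dot_None x : x != top ->
  mobz hle hrank dot (Some x) None = 'X * mobzR x top.
Proof.
move=> xNtop; rewrite /mobz mobius_dot_None //=.
have rx_le := rank_le ranked (le_top x).
have -> : absz (rank top + 1 - rank x)%R = (absz (rank top - rank x)%R).+1.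
  by lia.
by rewrite exprS mulrCA.
Qed.

Lemma MobPoly_hat : MobPoly hle hrank [set: option T] =
  1 - 'X + \sum_x (mobzR x top + \sum_(y | le x y && (y != top)) mobzR x y).
Proof.
rewrite /MobPoly big_option_None ?in_setT // big_option_None ?in_setT //.
rewrite [mobz _ _ _ None _]mobz_refl big_pred0 => [|y]; last first.
  by rewrite in_setT andbF.
rewrite addr0 -addrA; congr (_ + _).
rewrite (eq_bigl _ _ (fun x => in_setT (Some x))).
rewrite (eq_bigr (fun x => (if x == top then - 'X else 0) +
    (mobzR x top + \sum_(y | le x y && (y != top)) mobzR x y))) => [|x _].
  by rewrite big_split /= -big_mkcond big_pred1_eq.
rewrite big_option_None ?in_setT // mobz_hat_None; congr (_ + _).
rewrite (bigD1 top) ?in_setT ?le_top //= mobz_hat_Some; congr (_ + _).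
by apply: eq_big => [y|y _]; rewrite ?in_setT ?mobz_hat_Some.
Qed.

Lemma MobPoly_dot : MobPoly hle hrank dot =
  1 + \sum_(x | x != top)
        ('X * mobzR x top + \sum_(y | le x y && (y != top)) mobzR x y).
Proof.
rewrite /MobPoly big_option_None ?inE // big_option_None ?inE //.
rewrite [mobz _ _ _ None _]mobz_refl big_pred0 => [|y]; last by rewrite andbF.
rewrite addr0; congr (_ + _).
apply: eq_big => [x|x]; rewrite inE (inj_eq Some_inj) // => xNtop.
rewrite big_option_None ?inE // mobz_dot_None //; congr (_ + _).
apply: eq_big => [y|y]; first by rewrite inE (inj_eq Some_inj) andbC.
by rewrite inE (inj_eq Some_inj) => /andP[yNtop _]; apply: mobz_dot_Some.
Qed.

Lemma sum_above_top (F : T -> {poly int}) :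
  \sum_(y | le top y && (y != top)) F y = 0.
Proof. by rewrite big_pred0 // => y; rewrite le_topE andbN. Qed.

End TopPolynomial.

Theorem mainTheorem10 (T : finType) (le : rel T) (rank : T -> int) (top : T) :
  ranked_poset le rank ->
  (forall x, le x top) ->
  MobPoly (hat_le le) (hat_rank rank top) [set x | x != Some top]
  = MobPoly (hat_le le) (hat_rank rank top) [set: option T]
    - (1 - 'X) * top_poly le rank top.
Proof.
move=> ranked le_top.
rewrite MobPoly_dot // MobPoly_hat // top_poly_eq // !big_split /= -mulr_sumr.
rewrite [\sum_x mobz _ _ _ x top](bigD1 top) //= mobz_refl.
rewrite [\sum_x \sum_(y | _) _](bigD1 top) //= (sum_above_top ranked le_top).
ring.
Qed.
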